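(* Fix spins $j_1,\dots,j_4\in\frac12\mathbb{Z}_{\ge0}$ with $J=j_1+j_2+j_3+j_4\in\mathbb{Z}$. Then in $\mathcal{H}_{j_1j_2j_3j_4}$ the states $|S,T\rangle$ are not linearly independent, and all the linear relations among them are generated by the fundamental relation $$(k_{12}+1)(k_{34}+1)\,|S-1,T\rangle-(k_{13}+1)(k_{24}+1)\,|S,T-1\rangle+k_{14}k_{23}\,|S,T\rangle=0,$$ where $k_{ij}=k_{ij}(j_i,S,T)$.
   Context: Spinors: $[z|w\rangle=z_0w_1-z_1w_0$ for $z,w\in\mathbb{C}^2$. $\mathcal{H}_{j_1j_2j_3j_4}$ is the space of holomorphic functions $f(z_1,\dots,z_4)$ on $(\mathbb{C}^2)^4$ that are homogeneous of degree $2j_i$ in $z_i$ and invariant under $z_i\mapsto gz_i$ for all $g\in SU(2)$ (the space of 4-valent $SU(2)$ intertwiners). For integers or half-integers $S,T$ with $S-j_1-j_2\in\mathbb{Z}$ and $T-j_1-j_3\in\mathbb{Z}$, put $U=J-S-T$ and $$k_{12}=j_1+j_2-S,\ k_{34}=j_3+j_4-S,\ k_{13}=j_1+j_3-T,\ k_{24}=j_2+j_4-T,\ k_{14}=j_1+j_4-U,\ k_{23}=j_2+j_3-U.$$ $(S,T)$ is admissible if all $k_{ij}\ge0$. For admissible $(S,T)$, $|S,T\rangle$ is the function $$(z_i|S,T\rangle=\prod_{i<j}\frac{[z_i|z_j\rangle^{k_{ij}}}{k_{ij}!},$$ and $|S,T\rangle:=0$ if $(S,T)$ is not admissible. *)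

(* Spins and the labels S, T are rationals (half-integers). *)
From HB Require Import structures.
From mathcomp Require Import all_boot all_order all_algebra.
Set Implicit Arguments.
Unset Strict Implicit.
Unset Printing Implicit Defensive.
Import Order.TTheory GRing.Theory Num.Theory.
Local Open Scope ring_scope.

Definition Jtot (j1 j2 j3 j4 : rat) : rat := j1 + j2 + j3 + j4.
Definition Uof (j1 j2 j3 j4 S T : rat) : rat := Jtot j1 j2 j3 j4 - S - T.

Definition k12 (j1 j2 j3 j4 S T : rat) : rat := j1 + j2 - S.
Definition k34 (j1 j2 j3 j4 S T : rat) : rat := j3 + j4 - S.
Definition k13 (j1 j2 j3 j4 S T : rat) : rat := j1 + j3 - T.
Definition k24 (j1 j2 j3 j4 S T : rat) : rat := j2 + j4 - T.
Definition k14 (j1 j2 j3 j4 S T : rat) : rat := j1 + j4 - Uof j1 j2 j3 j4 S T.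
Definition k23 (j1 j2 j3 j4 S T : rat) : rat := j2 + j3 - Uof j1 j2 j3 j4 S T.

Definition validST (j1 j2 j3 j4 S T : rat) : bool :=
  ((S - j1 - j2) \is a Num.int) && ((T - j1 - j3) \is a Num.int).

Definition admissible (j1 j2 j3 j4 S T : rat) : bool :=
  validST j1 j2 j3 j4 S T &&
  [&& 0 <= k12 j1 j2 j3 j4 S T, 0 <= k34 j1 j2 j3 j4 S T,
      0 <= k13 j1 j2 j3 j4 S T, 0 <= k24 j1 j2 j3 j4 S T,
      0 <= k14 j1 j2 j3 j4 S T & 0 <= k23 j1 j2 j3 j4 S T].

Definition bracket (C : fieldType) (z w : C * C) : C := z.1 * w.2 - z.2 * w.1.

Definition bfactor (C : fieldType) (z w : C * C) (k : rat) : C :=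
  bracket z w ^+ Num.truncn k / ((Num.truncn k)`!)%:R.

(* The state |S,T>, as a function of (z_1,...,z_4) = (z 0, ..., z 3);
   it is 0 when (S,T) is not admissible. *)
Definition state (C : fieldType) (j1 j2 j3 j4 S T : rat)
    (z : 'I_4 -> C * C) : C :=
  if admissible j1 j2 j3 j4 S T then
    bfactor (z (inord 0)) (z (inord 1)) (k12 j1 j2 j3 j4 S T) *
    bfactor (z (inord 0)) (z (inord 2)) (k13 j1 j2 j3 j4 S T) *
    bfactor (z (inord 0)) (z (inord 3)) (k14 j1 j2 j3 j4 S T) *
    bfactor (z (inord 1)) (z (inord 2)) (k23 j1 j2 j3 j4 S T) *
    bfactor (z (inord 1)) (z (inord 3)) (k24 j1 j2 j3 j4 S T) *
    bfactor (z (inord 2)) (z (inord 3)) (k34 j1 j2 j3 j4 S T)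
  else 0.

Definition fa (j1 j2 j3 j4 S T : rat) : rat :=
  (k12 j1 j2 j3 j4 S T + 1) * (k34 j1 j2 j3 j4 S T + 1).
Definition fb (j1 j2 j3 j4 S T : rat) : rat :=
  (k13 j1 j2 j3 j4 S T + 1) * (k24 j1 j2 j3 j4 S T + 1).
Definition fc (j1 j2 j3 j4 S T : rat) : rat :=
  k14 j1 j2 j3 j4 S T * k23 j1 j2 j3 j4 S T.

Definition fundcoef (C : fieldType) (j1 j2 j3 j4 : rat) (q p : rat * rat) : C :=
  let S := q.1 in let T := q.2 in
  (ratr (fa j1 j2 j3 j4 S T) : C) *+ (p == (S - 1, T))
  - (ratr (fb j1 j2 j3 j4 S T) : C) *+ (p == (S, T - 1))
  + (ratr (fc j1 j2 j3 j4 S T) : C) *+ (p == (S, T)).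

From HB Require Import structures.
From mathcomp Require Import all_boot all_order all_algebra.
From mathcomp Require Import ring lra.
Import Order.TTheory GRing.Theory Num.Theory.
Set Implicit Arguments.
Unset Strict Implicit.
Unset Printing Implicit Defensive.
Local Open Scope ring_scope.

(* Soundness: on valid labels a state is the product of the divided powers
   [z_i|z_j>^k_ij / k_ij!, read as 0 when k_ij < 0.  The identity
   (k+1) x^[k+1] = x x^[k], valid for every integer k, turns the three terms of
   the fundamental relation into the Plücker identity
   [12][34] - [13][24] + [14][23] = 0 times a common factor.
   Completeness: when k14, k23 >= 1 the fundamental relation expresses |S,T>
   through |S-1,T> and |S,T-1>, which have smaller k14; hence every formal
   combination is equivalent, modulo fundamental relations, to one supported on
   states with k14 = 0 or k23 = 0.  On those states k14 is a constant and k12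
   determines (S,T), so on the spinors (1,0), (1,t), (0,1), (-1,1-t) they become
   (1-t)^k14 times distinct monomials t^k12: they are linearly independent. *)

Lemma intr_ge1E (R : archiNumDomainType) (x : R) :
  x \is a Num.int -> 0 <= x -> (1 <= x) = (x != 0).
Proof.
by move=> /intrP[m ->]; rewrite ler0z ler1z intr_eq0 -gtz0_ge1 lt_def => ->; rewrite andbT.
Qed.

Lemma intr_truncnK (R : archiNumDomainType) (x : R) :
  x \is a Num.int -> 0 <= x -> (Num.truncn x)%:R = x.
Proof. by move=> xi x0; rewrite truncnK // natrEint xi. Qed.

Lemma partition_big_fst (I : eqType) (R : pzSemiRingType) (L : seq (I * R))
    (F : I -> R) :
  \sum_(x <- L) x.2 * F x.1 =
  \sum_(i <- undup (map fst L)) (\sum_(x <- L | x.1 == i) x.2) * F i.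
Proof.
under [RHS]eq_bigr do rewrite mulr_suml big_mkcond.
rewrite exchange_big /=; apply: eq_big_seq => x xL.
rewrite -big_mkcond (big_rem x.1) ?mem_undup ?map_f //= eqxx big1_seq ?addr0 // => i.
by case/andP=> /eqP <-; rewrite mem_rem_uniqF ?undup_uniq.
Qed.

Lemma poly_eq0_of_horner (R : numDomainType) (p : {poly R}) :
  (forall x, p.[x] = 0) -> p = 0.
Proof.
move=> p0; apply: (@roots_geq_poly_eq0 _ _ [seq i%:R | i <- iota 0 (size p)]).
- by apply/allP => x _; apply/eqP/p0.
- by rewrite map_inj_uniq ?iota_uniq // => i j /eqP; rewrite eqr_nat => /eqP.
- by rewrite size_map size_iota.
Qed.

(* x^k/k!, extended by 0 to k < 0 so that divpow_rec holds for every integer k. *)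
Definition divpow (C : fieldType) (x : C) (k : rat) : C :=
  if 0 <= k then x ^+ Num.truncn k / (Num.truncn k)`!%:R else 0.

Lemma divpow_exp (C : fieldType) (x : C) k : divpow x k = x ^+ Num.truncn k * divpow 1 k.
Proof. by rewrite /divpow; case: ifP; rewrite ?mulr0 // expr1n mulrA mulr1. Qed.

Lemma divpow1_neq0 (C : numFieldType) k : 0 <= k -> divpow (1 : C) k != 0.
Proof. by move=> k0; rewrite /divpow k0 expr1n mul1r invr_eq0 pnatr_eq0 -lt0n fact_gt0. Qed.

Lemma divpow_rec (C : numFieldType) (x : C) k :
  k \is a Num.int -> ratr k * divpow x k = x * divpow x (k - 1).
Proof.
move=> ki; have [k_le0|k_gt0] := lerP k 0.
  rewrite [divpow x (k - 1)]/divpow ifF ?mulr0; last by apply/negbTE; rewrite -ltNge; lra.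
  have [->|kn0] := eqVneq k 0; first by rewrite rmorph0 mul0r.
  by rewrite /divpow ifF ?mulr0 //; apply/negbTE; rewrite -ltNge lt_neqAle kn0.
have [n ->] : exists n : nat, k = n.+1%:R.
  exists (Num.truncn (k - 1)); rewrite -natr1 intr_truncnK ?subrK ?rpredB // subr_ge0.
  by rewrite intr_ge1E ?(ltW k_gt0) ?gt_eqF.
have -> : n.+1%:R - 1 = n%:R :> rat by rewrite -natr1 addrK.
rewrite ratr_nat /divpow !ler0n !natrK factS natrM exprS.
have nf : n`!%:R != 0 :> C by rewrite pnatr_eq0 -lt0n fact_gt0.
by field; rewrite nf addrC natr1 pnatr_eq0.
Qed.

Lemma divpowS (C : numFieldType) (x : C) k :
  k \is a Num.int -> ratr (k + 1) * divpow x (k + 1) = x * divpow x k.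
Proof. by move=> ki; rewrite divpow_rec ?addrK //; apply: rpredD ki (rpred1 _). Qed.

Lemma bracket_plucker (C : fieldType) (a b c d : C * C) :
  bracket a b * bracket c d - bracket a c * bracket b d + bracket a d * bracket b c = 0.
Proof. by rewrite /bracket; ring. Qed.

Lemma three_term_relation (R : comPzRingType)
    (x12 x13 x14 x23 x24 x34 a12 a13 a14 a23 a24 a34 : R)
    (u12 u13 u14 u23 u24 u34 v12 v13 v14 v23 v24 v34 : R) :
  x12 * x34 - x13 * x24 + x14 * x23 = 0 ->
  a12 * v12 = x12 * u12 -> a13 * v13 = x13 * u13 -> a14 * v14 = x14 * u14 ->
  a23 * v23 = x23 * u23 -> a24 * v24 = x24 * u24 -> a34 * v34 = x34 * u34 ->
  a12 * a34 * (v12 * u13 * u14 * u23 * u24 * v34)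
  - a13 * a24 * (u12 * v13 * u14 * u23 * v24 * u34)
  + a14 * a23 * (u12 * u13 * v14 * v23 * u24 * u34) = 0.
Proof.
move=> plucker e12 e13 e14 e23 e24 e34.
transitivity ((a12 * v12) * (a34 * v34) * (u13 * u14 * u23 * u24)
  - (a13 * v13) * (a24 * v24) * (u12 * u14 * u23 * u34)
  + (a14 * v14) * (a23 * v23) * (u12 * u13 * u24 * u34)); first by ring.
rewrite e12 e13 e14 e23 e24 e34.
transitivity ((x12 * x34 - x13 * x24 + x14 * x23) * (u12 * u13 * u14 * u23 * u24 * u34)).
  by ring.
by rewrite plucker mul0r.
Qed.

Definition br (C : fieldType) (z : 'I_4 -> C * C) (i j : nat) : C :=
  bracket (z (inord i)) (z (inord j)).

Definition probe (C : fieldType) (t : C) (i : 'I_4) : C * C :=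
  nth (0, 0) [:: (1, 0); (1, t); (0, 1); (-1, 1 - t)] i.

Section FourValentStates.

Variables j1 j2 j3 j4 : rat.
Hypotheses (hj1 : j1 *+ 2 \is a Num.int) (hj2 : j2 *+ 2 \is a Num.int)
  (hj3 : j3 *+ 2 \is a Num.int) (hJ : Jtot j1 j2 j3 j4 \is a Num.int).

Local Notation K12 := (k12 j1 j2 j3 j4).
Local Notation K13 := (k13 j1 j2 j3 j4).
Local Notation K14 := (k14 j1 j2 j3 j4).
Local Notation K23 := (k23 j1 j2 j3 j4).
Local Notation K24 := (k24 j1 j2 j3 j4).
Local Notation K34 := (k34 j1 j2 j3 j4).
Local Notation valid := (validST j1 j2 j3 j4).
Local Notation adm := (admissible j1 j2 j3 j4).

Lemma k_int S T : valid S T ->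
  [&& K12 S T \is a Num.int, K13 S T \is a Num.int, K14 S T \is a Num.int,
      K23 S T \is a Num.int, K24 S T \is a Num.int & K34 S T \is a Num.int].
Proof.
case/andP=> si ti.
have -> : K12 S T = - (S - j1 - j2) by rewrite /k12; ring.
have -> : K13 S T = - (T - j1 - j3) by rewrite /k13; ring.
have -> : K14 S T = (S - j1 - j2) + (T - j1 - j3) + j1 *+ 2.
  by rewrite /k14 /Uof /Jtot mulr2n; ring.
have -> : K23 S T =
    (S - j1 - j2) + (T - j1 - j3) + j1 *+ 2 + j2 *+ 2 + j3 *+ 2 - Jtot j1 j2 j3 j4.
  by rewrite /k23 /Uof /Jtot !mulr2n; ring.
have -> : K24 S T = Jtot j1 j2 j3 j4 - (T - j1 - j3) - j1 *+ 2 - j3 *+ 2.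
  by rewrite /k24 /Jtot !mulr2n; ring.
have -> : K34 S T = Jtot j1 j2 j3 j4 - (S - j1 - j2) - j1 *+ 2 - j2 *+ 2.
  by rewrite /k34 /Jtot !mulr2n; ring.
move: (S - j1 - j2) (T - j1 - j3) (j1 *+ 2) (j2 *+ 2) (j3 *+ 2) (Jtot j1 j2 j3 j4)
  si ti hj1 hj2 hj3 hJ => s t a1 a2 a3 J si ti i1 i2 i3 iJ.
by apply/and5P; split; try apply/andP; try split; rewrite ?(rpredD, rpredB, rpredN).
Qed.

Variable C : numFieldType.
Local Notation st := (@state C j1 j2 j3 j4).

Lemma state_divpow S T z : valid S T ->
  st S T z = divpow (br z 0 1) (K12 S T) * divpow (br z 0 2) (K13 S T)
    * divpow (br z 0 3) (K14 S T) * divpow (br z 1 2) (K23 S T)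
    * divpow (br z 1 3) (K24 S T) * divpow (br z 2 3) (K34 S T).
Proof.
move=> vST; rewrite /state /admissible vST /divpow /bfactor /br.
by case: (0 <= K12 S T); case: (0 <= K13 S T); case: (0 <= K14 S T);
  case: (0 <= K23 S T); case: (0 <= K24 S T); case: (0 <= K34 S T);
  rewrite /= ?mulr0 ?mul0r.
Qed.

Lemma state_lowerS S T z : valid S T ->
  st (S - 1) T z = divpow (br z 0 1) (K12 S T + 1) * divpow (br z 0 2) (K13 S T)
    * divpow (br z 0 3) (K14 S T - 1) * divpow (br z 1 2) (K23 S T - 1)
    * divpow (br z 1 3) (K24 S T) * divpow (br z 2 3) (K34 S T + 1).
Proof.
case/andP=> si ti; rewrite state_divpow; last first.
  rewrite /validST ti andbT (_ : S - 1 - j1 - j2 = S - j1 - j2 - 1); last by ring.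
  exact: rpredB si (rpred1 _).
by congr (_ * _ * _ * _ * _ * _); congr divpow;
  rewrite /k12 /k13 /k14 /k23 /k24 /k34 /Uof /Jtot; ring.
Qed.

Lemma state_lowerT S T z : valid S T ->
  st S (T - 1) z = divpow (br z 0 1) (K12 S T) * divpow (br z 0 2) (K13 S T + 1)
    * divpow (br z 0 3) (K14 S T - 1) * divpow (br z 1 2) (K23 S T - 1)
    * divpow (br z 1 3) (K24 S T + 1) * divpow (br z 2 3) (K34 S T).
Proof.
case/andP=> si ti; rewrite state_divpow; last first.
  rewrite /validST si (_ : T - 1 - j1 - j3 = T - j1 - j3 - 1); last by ring.
  exact: rpredB ti (rpred1 _).
by congr (_ * _ * _ * _ * _ * _); congr divpow;
  rewrite /k12 /k13 /k14 /k23 /k24 /k34 /Uof /Jtot; ring.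
Qed.

Lemma fundamental_relation S T z : valid S T ->
  ratr (fa j1 j2 j3 j4 S T) * st (S - 1) T z - ratr (fb j1 j2 j3 j4 S T) * st S (T - 1) z
  + ratr (fc j1 j2 j3 j4 S T) * st S T z = 0.
Proof.
move=> vST; have /and5P[i12 i13 i14 i23 /andP[i24 i34]] := k_int vST.
rewrite state_lowerS // state_lowerT // state_divpow // /fa /fb /fc !rmorphM.
have plucker := bracket_plucker (z (inord 0)) (z (inord 1)) (z (inord 2)) (z (inord 3)).
by apply: three_term_relation plucker _ _ _ _ _ _; rewrite ?divpowS ?divpow_rec.
Qed.

(* The other admissible states, with k14 = 0 or k23 = 0, are called normal below. *)
Definition reducible (p : rat * rat) : bool :=
  [&& adm p.1 p.2, 1 <= K14 p.1 p.2 & 1 <= K23 p.1 p.2].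

(* Formal combinations are lists of (label, coefficient) pairs; labels may repeat. *)
Definition comb_coef (L : seq (rat * rat * C)) (p : rat * rat) : C :=
  \sum_(x <- L | x.1 == p) x.2.
Definition comb_eval (L : seq (rat * rat * C)) (z : 'I_4 -> C * C) : C :=
  \sum_(x <- L) x.2 * st x.1.1 x.1.2 z.
Definition rel_coef (R : seq (rat * rat * C)) (p : rat * rat) : C :=
  \sum_(y <- R) y.2 * fundcoef C j1 j2 j3 j4 y.1 p.

Definition rel_equiv (L L' : seq (rat * rat * C)) : Prop :=
  exists R, [/\ all (fun y => valid y.1.1 y.1.2) R,
    forall p, comb_coef L p = comb_coef L' p + rel_coef R p &
    forall z, comb_eval L z = comb_eval L' z].

Lemma rel_equiv_refl L : rel_equiv L L.
Proof. by exists [::]; split=> // p; rewrite /rel_coef big_nil addr0. Qed.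

Lemma rel_equiv_trans L M N : rel_equiv L M -> rel_equiv M N -> rel_equiv L N.
Proof.
move=> [R1 [v1 c1 e1]] [R2 [v2 c2 e2]]; exists (R2 ++ R1); split.
- by rewrite all_cat v1 v2.
- by move=> p; rewrite c1 c2 /rel_coef big_cat addrA.
- by move=> z; rewrite e1 e2.
Qed.

Lemma rel_equiv_cat L1 L2 N1 N2 :
  rel_equiv L1 N1 -> rel_equiv L2 N2 -> rel_equiv (L1 ++ L2) (N1 ++ N2).
Proof.
move=> [R1 [v1 c1 e1]] [R2 [v2 c2 e2]]; exists (R1 ++ R2); split.
- by rewrite all_cat v1 v2.
- move=> p; rewrite /comb_coef !big_cat -!/(comb_coef _ p) c1 c2.
  by rewrite /rel_coef big_cat addrACA.
- by move=> z; rewrite /comb_eval !big_cat -!/(comb_eval _ z) e1 e2.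
Qed.

Lemma reduce_term p l : reducible p ->
  let a := ratr (fa j1 j2 j3 j4 p.1 p.2) in let b := ratr (fb j1 j2 j3 j4 p.1 p.2) in
  let c := ratr (fc j1 j2 j3 j4 p.1 p.2) in
  rel_equiv [:: (p, l)] [:: ((p.1 - 1, p.2), - (l * a) / c); ((p.1, p.2 - 1), l * b / c)].
Proof.
case: p => S T /and3P[ap k14_ge1 k23_ge1] a b c /=.
have c_neq0 : c != 0 by rewrite fmorph_eq0 /fc mulf_neq0 // gt_eqF // (lt_le_trans ltr01).
exists [:: ((S, T), l / c)]; split.
- by rewrite /= andbT; case/andP: ap.
- move=> p; rewrite /comb_coef /rel_coef !big_cons !big_nil /fundcoef /= ![_ == p]eq_sym.
  by case: (p == (S - 1, T)); case: (p == (S, T - 1)); case: (p == (S, T));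
    rewrite /= ?mulr0n ?mulr1n; field.
- move=> z; rewrite /comb_eval !big_cons !big_nil /= !addr0.
  have rel := fundamental_relation z (proj1 (andP ap)).
  by rewrite -[LHS]subr0 -(mulr0 (l / c)) -{1}rel; field.
Qed.

Lemma rel_equiv_normal_term x :
  exists2 N, rel_equiv [:: x] N & all (fun y => ~~ reducible y.1) N.
Proof.
(* Induction on a bound for k14, which each reduction step lowers by one. *)
suff bounded n : forall x, K14 x.1.1 x.1.2 < n%:R ->
    exists2 N, rel_equiv [:: x] N & all (fun y => ~~ reducible y.1) N.
  exact: bounded _ x (truncnS_gt _).
elim: n => [|n IH] [p l] /= k14_lt.
  exists [:: (p, l)]; first exact: rel_equiv_refl.
  by rewrite /= andbT; apply/negP => /and3P[_ k14_ge1 _]; lra.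
have [p_red|p_nred] := boolP (reducible p); last first.
  by exists [:: (p, l)]; [exact: rel_equiv_refl | rewrite /= p_nred].
have [|N1 e1 n1] := IH ((p.1 - 1, p.2), - (l * ratr (fa j1 j2 j3 j4 p.1 p.2))
                                           / ratr (fc j1 j2 j3 j4 p.1 p.2)).
  by move: k14_lt; rewrite /k14 /Uof -natr1 /=; lra.
have [|N2 e2 n2] := IH ((p.1, p.2 - 1), l * ratr (fb j1 j2 j3 j4 p.1 p.2)
                                          / ratr (fc j1 j2 j3 j4 p.1 p.2)).
  by move: k14_lt; rewrite /k14 /Uof -natr1 /=; lra.
exists (N1 ++ N2); last by rewrite all_cat n1 n2.
exact: rel_equiv_trans (reduce_term l p_red) (rel_equiv_cat e1 e2).
Qed.

Lemma rel_equiv_normal L :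
  exists2 N, rel_equiv L N & all (fun y => ~~ reducible y.1) N.
Proof.
elim: L => [|x L [N eN nN]]; first by exists [::]; first exact: rel_equiv_refl.
have [Nx ex nx] := rel_equiv_normal_term x.
exists (Nx ++ N); last by rewrite all_cat nx nN.
exact: rel_equiv_cat ex eN.
Qed.

Definition weight (p : rat * rat) : C :=
  divpow 1 (K12 p.1 p.2) * divpow 1 (K13 p.1 p.2) * divpow 1 (K14 p.1 p.2)
  * divpow 1 (K23 p.1 p.2) * divpow 1 (K24 p.1 p.2) * divpow 1 (K34 p.1 p.2).

Lemma state_probe p t : adm p.1 p.2 ->
  st p.1 p.2 (probe t)
  = t ^+ Num.truncn (K12 p.1 p.2) * (1 - t) ^+ Num.truncn (K14 p.1 p.2) * weight p.
Proof.
case/andP=> vp _; rewrite state_divpow // /weight /br /probe !inordK //.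
move: (K12 _ _) (K13 _ _) (K14 _ _) (K23 _ _) (K24 _ _) (K34 _ _) => a b c d e f.
rewrite /bracket /= !(mul1r, mul0r, mulr0, mulr1, mulrN1, subr0, sub0r, opprK, subrK).
by rewrite (divpow_exp t) (divpow_exp (1 - t)); ring.
Qed.

Lemma weight_neq0 p : adm p.1 p.2 -> weight p != 0.
Proof.
case/andP=> _ /and5P[g12 g34 g13 g24 /andP[g14 g23]].
by rewrite /weight !mulf_neq0 ?divpow1_neq0.
Qed.

Lemma normal_k14_k23 p : adm p.1 p.2 -> ~~ reducible p ->
  K14 p.1 p.2 = 0 \/ K23 p.1 p.2 = 0.
Proof.
move=> ap; have /andP[vp /and5P[_ _ _ _ /andP[g14 g23]]] := ap.
have /and5P[_ _ i14 i23 _] := k_int vp.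
rewrite /reducible ap !intr_ge1E //= negb_and !negbK.
by case/orP=> /eqP; [left | right].
Qed.

Lemma normal_k14_eq p q :
  adm p.1 p.2 -> adm q.1 q.2 -> ~~ reducible p -> ~~ reducible q ->
  K14 p.1 p.2 = K14 q.1 q.2.
Proof.
move=> ap aq np nq.
have k14_sub_k23 r : K14 r.1 r.2 - K23 r.1 r.2 = j1 + j4 - j2 - j3.
  by rewrite /k14 /k23; ring.
have := k14_sub_k23 p; have := k14_sub_k23 q.
have /andP[_ /and5P[_ _ _ _ /andP[gp14 gp23]]] := ap.
have /andP[_ /and5P[_ _ _ _ /andP[gq14 gq23]]] := aq.
by case: (normal_k14_k23 ap np) => ->; case: (normal_k14_k23 aq nq) => ->; lra.
Qed.

Lemma normal_label_inj p q :
  adm p.1 p.2 -> adm q.1 q.2 -> ~~ reducible p -> ~~ reducible q ->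
  Num.truncn (K12 p.1 p.2) = Num.truncn (K12 q.1 q.2) -> p = q.
Proof.
move=> ap aq np nq e.
have k12_nat r : adm r.1 r.2 -> (Num.truncn (K12 r.1 r.2))%:R = K12 r.1 r.2.
  case/andP=> vr /and5P[g12 _ _ _ _]; have /and5P[i12 _ _ _ _] := k_int vr.
  exact: intr_truncnK.
have := normal_k14_eq ap aq np nq.
have : K12 p.1 p.2 = K12 q.1 q.2 by rewrite -(k12_nat p) // -(k12_nat q) // e.
case: p q {ap aq np nq e} => [S T] [S' T']; rewrite /k12 /k14 /Uof /Jtot /= => e12 e14.
by congr pair; lra.
Qed.

Lemma normal_coef_eq0 N : all (fun y => ~~ reducible y.1) N ->
  (forall z, comb_eval N z = 0) -> forall p, adm p.1 p.2 -> comb_coef N p = 0.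
Proof.
move=> /allP nN eN p ap; have [p_red|p_nred] := boolP (reducible p).
  rewrite /comb_coef big1_seq // => x /andP[/eqP xp xN].
  by move: (nN x xN); rewrite xp p_red.
pose deg (q : rat * rat) := Num.truncn (K12 q.1 q.2).
pose P := \sum_(x <- N | adm x.1.1 x.1.2) (x.2 * weight x.1) *: 'X^(deg x.1).
have eval_probe t :
    comb_eval N (probe t) = ((1 - 'X) ^+ Num.truncn (K14 p.1 p.2) * P).[t].
  rewrite hornerM horner_exp !hornerE horner_sum mulr_sumr /comb_eval [RHS]big_mkcond.
  apply: eq_big_seq => x xN; have [ax|nax] := boolP (adm x.1.1 x.1.2).
    rewrite state_probe // hornerZ hornerXn (normal_k14_eq ax ap (nN x xN) p_nred) /deg.
    by move: (weight _) (t ^+ _) ((1 - t) ^+ _) => w a b; ring.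
  by rewrite /state (negbTE nax) mulr0.
have P0 : P = 0.
  have /eqP := poly_eq0_of_horner (fun t => etrans (esym (eval_probe t)) (eN _)).
  rewrite mulf_eq0 expf_eq0 => /orP[/andP[_ /eqP]|/eqP //].
  by move/(congr1 (horner^~ 0)); rewrite !hornerE subr0 => /eqP; rewrite oner_eq0.
suff : weight p * comb_coef N p = P`_(deg p).
  by rewrite P0 coef0 => /eqP; rewrite mulf_eq0 (negbTE (weight_neq0 ap)) => /eqP.
rewrite /P coef_sum /comb_coef mulr_sumr big_mkcond [RHS]big_mkcond.
apply: eq_big_seq => x xN; rewrite coefZ coefXn.
have [xp|xnp] := eqVneq x.1 p; first by rewrite xp ap eqxx mulr1 mulrC.
case: ifP => // ax; case: eqP => [e|]; last by rewrite mulr0.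
by case/eqP: xnp; exact: normal_label_inj ax ap (nN x xN) p_nred (esym e).
Qed.

End FourValentStates.

Unset Implicit Arguments.

Theorem mainTheorem7 (C : numClosedFieldType) (j1 j2 j3 j4 : rat)
  (hj1 : (j1 *+ 2) \is a Num.nat) (hj2 : (j2 *+ 2) \is a Num.nat)
  (hj3 : (j3 *+ 2) \is a Num.nat) (hj4 : (j4 *+ 2) \is a Num.nat)
  (hJ : Jtot j1 j2 j3 j4 \is a Num.int) :
  (* the fundamental relation holds for every (S,T) *)
  (forall S T : rat, validST j1 j2 j3 j4 S T ->
     forall z : 'I_4 -> C * C,
       (ratr (fa j1 j2 j3 j4 S T) : C) * state j1 j2 j3 j4 (S - 1) T z
       - (ratr (fb j1 j2 j3 j4 S T) : C) * state j1 j2 j3 j4 S (T - 1) z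
       + (ratr (fc j1 j2 j3 j4 S T) : C) * state j1 j2 j3 j4 S T z = 0)
  /\
  (* every linear relation among the states is a linear combination of
     fundamental relations *)
  (forall (P : seq (rat * rat)) (c : rat * rat -> C),
     (forall z : 'I_4 -> C * C,
        \sum_(p <- P) c p * state j1 j2 j3 j4 p.1 p.2 z = 0) ->
     exists (Q : seq (rat * rat)) (lam : rat * rat -> C),
       all (fun q => validST j1 j2 j3 j4 q.1 q.2) Q /\
       forall p : rat * rat, admissible j1 j2 j3 j4 p.1 p.2 ->
         \sum_(p' <- P | p' == p) c p' =
         \sum_(q <- Q) lam q * fundcoef C j1 j2 j3 j4 q p).
Proof.
(* Only 2 j1, 2 j2, 2 j3 and J need to be integers; hj4 follows from them. *)
move: (intr_nat hj1) (intr_nat hj2) (intr_nat hj3) => i1 i2 i3.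
split=> [S T vST z | P c relP]; first exact: fundamental_relation.
have [N [R [vR coefN evalN]] nN] :=
  rel_equiv_normal i1 i2 i3 hJ [seq (p, c p) | p <- P].
exists (undup (map fst R)), (comb_coef R); split.
  by apply/allP => q; rewrite mem_undup => /mapP[y /(allP vR) vy ->].
have evalN0 z : comb_eval j1 j2 j3 j4 N z = 0.
  by rewrite -evalN /comb_eval big_map; apply: relP.
move=> p ap; have coefN0 := normal_coef_eq0 i1 i2 i3 hJ nN evalN0 ap.
transitivity (comb_coef [seq (p, c p) | p <- P] p); first by rewrite /comb_coef big_map.
rewrite coefN coefN0 add0r /rel_coef.
exact: partition_big_fst R (fundcoef C j1 j2 j3 j4 ^~ p).
Qed.
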